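(* Let $\mathcal{X}=\prod_{r=1}^d\mathcal{Z}_r$ be a product of nonempty convex compact subsets of Euclidean spaces, $F$ an $L$-Lipschitz operator on $\mathcal{X}$ with components $F_r$, $B_F:=\max_r\sup_{x}\|F_r(x)\|_2$, and suppose the average $(\alpha,\ell,h)$-generalized Minty property holds. Then the iterates of rescaled optimistic gradient descent with learning rate $\eta\le\frac14\sqrt{\frac{\ell}{h^3L^2+hB_F^2\alpha^2d}}$ satisfy, for every $T\in\mathbb{N}$, $$\sum_{t=1}^T\Big(\|x^{(t)}-\hat x^{(t)}\|_2^2+\|x^{(t)}-\hat x^{(t+1)}\|_2^2\Big)\le\frac{2D_{\mathcal{X}}^2h}{\ell}.$$
   Context: $D_{\mathcal{X}}$ is the $\ell_2$ diameter of $\mathcal{X}$. $\mathbf{1}_{\mathcal{Z}_r}$ is the indicator vector of the coordinates of $\mathcal{Z}_r$; $\circ$ is the coordinatewise product; vector inequalities are coordinatewise. $A(x)=\sum_r a_r(x)\mathbf{1}_{\mathcal{Z}_r}$ with each $a_r$ $\alpha$-Lipschitz and $0<\ell\le A(x)\le h$; $W(x)=\sum_r w_r(x)\mathbf{1}_{\mathcal{Z}_r}$ with $0<\ell\le W(x)\le h$. The average $(\alpha,\ell,h)$-generalized Minty property: for every $T$ and sequence $(x^{(t)})_{t\le T}$ in $\mathcal{X}$ there is $x^\star\in\mathcal{X}$ with $\sum_{t=1}^T\langle x^{(t)}-x^\star,F(x^{(t)})\circ A(x^{(t)})\circ W(x^\star)\rangle\ge0$. Rescaled optimistic gradient descent: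 from arbitrary $x^{(0)}=\hat x^{(1)}\in\mathcal{X}$, $x^{(t)}=\Pi_{\mathcal{X}}(\hat x^{(t)}-\eta A(x^{(t-1)})\circ F(x^{(t-1)}))$ and $\hat x^{(t+1)}=\Pi_{\mathcal{X}}(\hat x^{(t)}-\eta A(x^{(t)})\circ F(x^{(t)}))$ for $t\ge1$, $\Pi_{\mathcal{X}}$ the Euclidean projection. *)

From HB Require Import structures.
From mathcomp Require Import all_boot all_order all_algebra.
From mathcomp Require Import all_classical all_reals all_analysis.
Set Implicit Arguments. Unset Strict Implicit. Unset Printing Implicit Defensive.
Import numFieldNormedType.Exports.
Import Order.TTheory GRing.Theory Num.Theory.
Local Open Scope classical_set_scope.
Local Open Scope ring_scope.

Section Defs.
Variables (R : realType) (n : nat).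
Notation vec := 'rV[R]_n.

Definition dotv (x y : vec) : R := \sum_(i < n) x ord0 i * y ord0 i.
Definition norm2 (x : vec) : R := Num.sqrt (dotv x x).

Definition hadamard (x y : vec) : vec := \row_i (x ord0 i * y ord0 i).

Definition convex_vset (S : set vec) : Prop :=
  forall x y, S x -> S y -> forall t : R, 0 <= t -> t <= 1 ->
    S (t *: x + (1 - t) *: y).

Definition is_proj (S : set vec) (y p : vec) : Prop :=
  S p /\ forall z, S z -> norm2 (y - p) <= norm2 (y - z).

Definition diam2 (S : set vec) : R :=
  sup [set norm2 (x - y) | x in S & y in S].

Variable d : nat.
Variable blk : 'I_n -> 'I_d. (* coordinate i belongs to block Z_(blk i) *)

Definition blockv (r : 'I_d) (x : vec) : vec :=
  \row_i (if blk i == r then x ord0 i else 0).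

(* sum_r a_r 1_{Z_r} *)
Definition blockdiag (a : 'I_d -> R) : vec := \row_i a (blk i).

Definition prodset (Z : 'I_d -> set vec) : set vec :=
  [set x | forall r, Z r (blockv r x)].

Definition BF (X : set vec) (F : vec -> vec) : R :=
  \big[Num.max/0]_(r < d) sup [set norm2 (blockv r (F x)) | x in X].

End Defs.

(* Let s be the point given by the Minty property for the iterates x(1), ..., x(T)
   and weigh coordinates by W = W(s).  Since W is constant on each block and the
   projection onto a product of convex sets acts block by block, both projection
   steps satisfy their variational inequalities in the W-weighted inner product.
   The optimistic three-point argument then gives, for P(t) = |xh(t) - s|_W^2,
     P(t+1) <= P(t) - ell (e(t) + f(t)) - 2 eta m(t) + 2 eta^2 h |g(t) - g(t-1)|^2,
   with g(t) = A(x(t)) o F(x(t)), e(t) = |x(t) - xh(t)|^2, f(t) = |x(t) - xh(t+1)|^2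
   and m(t) the t-th Minty term.  The rescaled operator A o F is Lipschitz with
   squared constant 2 h^2 L^2 + 2 d alpha^2 B_F^2, and |x(t) - x(t-1)|^2 is at most
   2 (e(t) + f(t-1)), so the step-size condition turns the last term into
   ell/2 (e(t) + f(t-1)).  Telescoping with sum m(t) >= 0 bounds ell/2 sum (e + f)
   by P(1) <= h D^2. *)
From HB Require Import structures.
From mathcomp Require Import all_boot all_order all_algebra.
From mathcomp Require Import all_classical all_reals all_analysis.
From mathcomp Require Import ring lra.
Set Implicit Arguments. Unset Strict Implicit. Unset Printing Implicit Defensive.
Import Order.TTheory GRing.Theory Num.Theory.
Import numFieldNormedType.Exports.
Local Open Scope classical_set_scope.
Local Open Scope ring_scope.

Lemma ler_sqr_mul (R : realFieldType) (p q L : R) :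
  0 <= p -> 0 <= q -> p <= L * q -> p ^+ 2 <= L ^+ 2 * q ^+ 2.
Proof. by move=> p0 q0 pq; nra. Qed.

Lemma potential_telescope (R : realFieldType) (c : R) (P e f m : nat -> R) (T : nat) :
  0 <= c -> f 0%N = 0 -> 0 <= f T -> 0 <= P T.+1 -> 0 <= \sum_(1 <= t < T.+1) m t ->
  (forall t, (1 <= t)%N -> P t.+1 <= P t - c * (e t + f t) - m t + c / 2 * (e t + f t.-1)) ->
  c / 2 * \sum_(1 <= t < T.+1) (e t + f t) <= P 1%N.
Proof.
move=> c0 f0 fT PT m0 step.
suff inv k : P k.+1 + c / 2 * \sum_(1 <= t < k.+1) (e t + f t) + c / 2 * f k
             <= P 1%N - \sum_(1 <= t < k.+1) m t.
  have := inv T; have : 0 <= c / 2 * f T by rewrite mulr_ge0 // divr_ge0.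
  lra.
elim: k => [|k IH]; first by rewrite !big_geq // f0; lra.
by rewrite !(big_nat_recr k.+1) //=; have /= := step k.+1 isT; lra.
Qed.

Section Euclidean.
Variables (R : realType) (n : nat).
Implicit Types (u v W : 'rV[R]_n) (S : set 'rV[R]_n).

Definition wdot W u v : R := \sum_i W ord0 i * (u ord0 i * v ord0 i).

Lemma dotv_ge0 u : 0 <= dotv u u.
Proof. by apply: sumr_ge0 => i _; rewrite -expr2 sqr_ge0. Qed.

Lemma norm2_ge0 u : 0 <= norm2 u.
Proof. exact: sqrtr_ge0. Qed.

Lemma norm2_sqr u : norm2 u ^+ 2 = dotv u u.
Proof. by rewrite sqr_sqrtr // dotv_ge0. Qed.

Lemma dotv_add_le u v : dotv (u + v) (u + v) <= 2 * dotv u u + 2 * dotv v v.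
Proof.
rewrite /dotv !mulr_sumr -big_split /=; apply: ler_sum => i _; rewrite !mxE.
by have := sqr_ge0 (u ord0 i - v ord0 i); nra.
Qed.

Lemma dotv_sub_le u v : dotv (u - v) (u - v) <= 2 * dotv u u + 2 * dotv v v.
Proof.
have -> : dotv v v = dotv (- v) (- v).
  by apply: eq_bigr => i _; rewrite !mxE mulrNN.
exact: dotv_add_le.
Qed.

Lemma norm2_dim0 u : n = 0%N -> norm2 u = 0.
Proof.
move=> n0; rewrite /norm2 /dotv big1 ?sqrtr0 // => i.
by have := ltn_ord i; rewrite [X in (_ < X)%N]n0.
Qed.

Lemma wdotNN W u : wdot W (- u) (- u) = wdot W u u.
Proof. by apply: eq_bigr => i _; rewrite !mxE mulrNN. Qed.

Lemma wdot_ge0 W u : (forall i, 0 <= W ord0 i) -> 0 <= wdot W u u.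
Proof. by move=> W0; apply: sumr_ge0 => i _; rewrite mulr_ge0 // -expr2 sqr_ge0. Qed.

Lemma wdot_ge_dotv W u (c : R) : (forall i, c <= W ord0 i) -> c * dotv u u <= wdot W u u.
Proof.
move=> cW; rewrite mulr_sumr; apply: ler_sum => i _.
by rewrite ler_wpM2r // -expr2 sqr_ge0.
Qed.

Lemma wdot_le_dotv W u (c : R) : (forall i, W ord0 i <= c) -> wdot W u u <= c * dotv u u.
Proof.
move=> Wc; rewrite mulr_sumr; apply: ler_sum => i _.
by rewrite ler_wpM2r // -expr2 sqr_ge0.
Qed.

Lemma proj_variational S y p z : convex_vset S -> is_proj S y p -> S z ->
  dotv (y - p) (z - p) <= 0.
Proof.
move=> cS [Sp Hp] Sz.
set c := dotv (y - p) (z - p); set q := dotv (z - p) (z - p).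
have H t : 0 < t -> t <= 1 -> 0 <= - 2 * t * c + t ^+ 2 * q.
  move=> t0 t1; have := Hp _ (cS _ _ Sz Sp t (ltW t0) t1).
  rewrite ler_sqrt ?dotv_ge0 // => Hle.
  have E : dotv (y - (t *: z + (1 - t) *: p)) (y - (t *: z + (1 - t) *: p)) =
     dotv (y - p) (y - p) + (- 2 * t * c + t ^+ 2 * q).
    rewrite /c /q /dotv !mulr_sumr.
    do ! (rewrite -sumrB || rewrite -big_split /=).
    by apply: eq_bigr => i _; rewrite !mxE; ring.
  by move: Hle; rewrite E lerDl.
(* Otherwise p + t (z - p) with t = c / (q + c) would be strictly closer to y. *)
rewrite leNgt; apply/negP => c0.
have q0 : 0 <= q by exact: dotv_ge0.
have qc0 : 0 < q + c by lra.
pose t := c / (q + c).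
have tE : t * (q + c) = c by rewrite /t divfK // gt_eqF.
have t0 : 0 < t by rewrite divr_gt0.
have t1 : t <= 1 by rewrite ler_pdivrMr // mul1r lerDr.
by have := H t t0 t1; nra.
Qed.

Lemma dotv_le_norm2 u v (L : R) : norm2 u <= L * norm2 v -> dotv u u <= L ^+ 2 * dotv v v.
Proof. by move=> uv; rewrite -!norm2_sqr ler_sqr_mul ?norm2_ge0. Qed.

Lemma dotv_hadamard_le W u (c : R) : (forall i, W ord0 i ^+ 2 <= c) ->
  dotv (hadamard W u) (hadamard W u) <= c * dotv u u.
Proof.
move=> Wc; rewrite mulr_sumr; apply: ler_sum => i _; rewrite !mxE.
by rewrite mulrACA -!expr2 ler_wpM2r // sqr_ge0.
Qed.

Lemma optimistic_three_point W (xh xh' x s G G' : 'rV[R]_n) (eta : R) :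
  (forall i, 0 <= W ord0 i) ->
  wdot W (xh - eta *: G - xh') (s - xh') <= 0 ->
  wdot W (xh - eta *: G' - x) (xh' - x) <= 0 ->
  wdot W (xh - eta *: G - xh') (x - xh') <= 0 ->
  wdot W (xh' - s) (xh' - s) <=
    wdot W (xh - s) (xh - s) - (wdot W (xh - x) (xh - x) + wdot W (xh' - x) (xh' - x))
    + 2 * eta * wdot W G (s - x) + 2 * eta ^+ 2 * wdot W (G - G') (G - G').
Proof.
move=> W0 VI1 VI2 VI3; set D := eta *: (G - G') - (x - xh').
have -> : wdot W (xh' - s) (xh' - s) =
    wdot W (xh - s) (xh - s) - (wdot W (xh - x) (xh - x) + wdot W (xh' - x) (xh' - x))
    + 2 * eta * wdot W G (s - x) + 2 * eta ^+ 2 * wdot W (G - G') (G - G')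
    + 2 * wdot W (xh - eta *: G - xh') (s - xh') + 4 * wdot W (xh - eta *: G' - x) (xh' - x)
    + 2 * wdot W (xh - eta *: G - xh') (x - xh') - 2 * wdot W D D.
  rewrite /wdot !mulr_sumr; do ! (rewrite -sumrB || rewrite -big_split /=).
  by apply: eq_bigr => i _; rewrite !mxE; ring.
by have := wdot_ge0 D W0; lra.
Qed.

Lemma diam2_dim0 S u : n = 0%N -> S u -> diam2 S = 0.
Proof.
move=> n0 Su; rewrite /diam2 -[RHS]sup1; congr sup; apply/seteqP; split.
  by move=> _ [x _ [y _ <-]]; rewrite norm2_dim0.
by move=> _ ->; exists u => //; exists u => //; rewrite norm2_dim0.
Qed.

Lemma le_diam2 S (M : R) u v : (forall z, S z -> dotv z z <= M) -> S u -> S v ->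
  norm2 (u - v) <= diam2 S.
Proof.
move=> HM Su Sv; apply: ub_le_sup; last by exists u => //; exists v.
exists (Num.sqrt (4 * M)) => _ [x Sx [y Sy <-]]; apply: ler_wsqrtr.
by have := dotv_sub_le x y; have := HM _ Sx; have := HM _ Sy; lra.
Qed.

Lemma lipschitz_bounded S (F : 'rV[R]_n -> 'rV[R]_n) (L M : R) z0 :
  (forall z, S z -> dotv z z <= M) ->
  (forall x y, S x -> S y -> norm2 (F x - F y) <= L * norm2 (x - y)) -> S z0 ->
  exists M', forall z, S z -> dotv (F z) (F z) <= M'.
Proof.
move=> HM HF Sz0; exists (2 * (L ^+ 2 * (4 * M)) + 2 * dotv (F z0) (F z0)) => z Sz.
rewrite -(subrK (F z0) (F z)); apply: le_trans (dotv_add_le _ _) _.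
rewrite lerD2r ler_pM2l //; apply: le_trans (dotv_le_norm2 (HF _ _ Sz Sz0)) _.
rewrite ler_wpM2l ?sqr_ge0 //.
by have := dotv_sub_le z z0; have := HM _ Sz; have := HM _ Sz0; lra.
Qed.

End Euclidean.

Section Blocks.
Variables (R : realType) (n d : nat) (blk : 'I_n -> 'I_d) (Z : 'I_d -> set 'rV[R]_n).
Local Notation X := (prodset blk Z).
Implicit Types (u v x y z : 'rV[R]_n).

Lemma blockvD r u v : blockv blk r (u + v) = blockv blk r u + blockv blk r v.
Proof. by apply/rowP => i; rewrite !mxE; case: ifP; rewrite ?addr0. Qed.

Lemma blockvZ r (t : R) u : blockv blk r (t *: u) = t *: blockv blk r u.
Proof. by apply/rowP => i; rewrite !mxE; case: ifP; rewrite ?mulr0. Qed.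

Lemma prodset_convex : (forall r, convex_vset (Z r)) -> convex_vset X.
Proof.
by move=> HZ x y Xx Xy t t0 t1 r; rewrite blockvD !blockvZ; apply: HZ.
Qed.

Lemma prodset_replace_block x z r : X x -> X z -> X (x + blockv blk r (z - x)).
Proof.
move=> Xx Xz q; have [->|qr] := eqVneq q r.
  have -> : blockv blk r (x + blockv blk r (z - x)) = blockv blk r z.
    by apply/rowP => i; rewrite !mxE; case: (blk i == r); rewrite // subrKC.
  exact: Xz.
have -> : blockv blk q (x + blockv blk r (z - x)) = blockv blk q x.
  apply/rowP => i; rewrite !mxE; have [iq|//] := eqVneq (blk i) q.
  by rewrite iq (negbTE qr) addr0.
exact: Xx.
Qed.

Lemma sum_blocks (f : 'I_d -> R) (g : 'I_n -> R) :
  \sum_i f (blk i) * g i = \sum_r f r * \sum_(i | blk i == r) g i.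
Proof.
rewrite (partition_big blk predT) //=; apply: eq_bigr => r _.
by rewrite mulr_sumr; apply: eq_bigr => i /eqP ->.
Qed.

Lemma dotv_blockv r v :
  dotv (blockv blk r v) (blockv blk r v) = \sum_(i | blk i == r) v ord0 i ^+ 2.
Proof.
by rewrite big_mkcond; apply: eq_bigr => i _; rewrite !mxE; case: ifP; rewrite ?mulr0.
Qed.

Lemma dotv_blockv_le r v : dotv (blockv blk r v) (blockv blk r v) <= dotv v v.
Proof.
rewrite dotv_blockv [leRHS](bigID (fun i => blk i == r)) /= lerDl.
by apply: sumr_ge0 => i _; rewrite -expr2 sqr_ge0.
Qed.

Lemma dotv_blockdiag_hadamard (c : 'I_d -> R) v :
  dotv (hadamard (blockdiag blk c) v) (hadamard (blockdiag blk c) v) =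
  \sum_r c r ^+ 2 * dotv (blockv blk r v) (blockv blk r v).
Proof.
transitivity (\sum_i c (blk i) ^+ 2 * v ord0 i ^+ 2).
  by apply: eq_bigr => i _; rewrite !mxE mulrACA -!expr2.
by rewrite (sum_blocks (fun r => c r ^+ 2)); apply: eq_bigr => r _; rewrite dotv_blockv.
Qed.

Lemma weighted_proj_variational (c : 'I_d -> R) y p z :
  (forall r, convex_vset (Z r)) -> (forall i, 0 <= blockdiag blk c ord0 i) -> is_proj X y p ->
  X z -> wdot (blockdiag blk c) (y - p) (z - p) <= 0.
Proof.
move=> HZ c0 projp Xz; have Xp : X p by case: projp.
(* c may be negative on blocks that contain no coordinate; clip it at 0. *)
rewrite /wdot (eq_bigr (fun i => Num.max 0 (c (blk i)) * ((y - p) ord0 i * (z - p) ord0 i)));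
  last by move=> i _; have := c0 i; rewrite mxE => /max_r ->.
rewrite (sum_blocks (fun r => Num.max 0 (c r))); apply: sumr_le0 => r _.
rewrite mulr_ge0_le0 ?le_max ?lexx //.
have -> : \sum_(i | blk i == r) (y - p) ord0 i * (z - p) ord0 i =
          dotv (y - p) (blockv blk r (z - p)).
  rewrite big_mkcond; apply: eq_bigr => i _.
  by rewrite [blockv _ _ _ _ _]mxE; case: ifP; rewrite ?mulr0.
have := proj_variational (prodset_convex HZ) projp (prodset_replace_block r Xp Xz).
by rewrite addrAC subrr add0r.
Qed.

Lemma prodset_bounded : (forall r, compact (Z r)) -> exists M, forall z, X z -> dotv z z <= M.
Proof.
move=> HZ; have Zbounded r : exists M : R, forall z, Z r z -> forall i, `|z ord0 i| <= M.
  have [M0 [_ HM0]] := compact_bounded (HZ r).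
  exists (M0 + 1) => z Zz i; apply: le_trans (HM0 (M0 + 1) _ z Zz); last by rewrite ltrDl.
  by rewrite [leRHS]mx_normrE; apply/bigmax_geP; right; exists (ord0, i).
have [M HM] := choice Zbounded.
exists (\sum_i M (blk i) ^+ 2) => z Xz; apply: ler_sum => i _.
have := HM _ _ (Xz (blk i)) i; rewrite mxE eqxx -expr2 -real_normK ?num_real // => zM.
by rewrite lerXn2r ?nnegrE // (le_trans _ zM).
Qed.

Lemma le_BF (S : set 'rV[R]_n) (F : 'rV[R]_n -> 'rV[R]_n) (M : R) z r :
  (forall z, S z -> dotv (F z) (F z) <= M) -> S z -> norm2 (blockv blk r (F z)) <= BF blk S F.
Proof.
move=> HM Sz; apply: (@le_trans _ _ (sup [set norm2 (blockv blk r (F x)) | x in S])).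
  apply: ub_le_sup; last by exists z.
  exists (Num.sqrt M) => _ [y Sy <-]; apply: ler_wsqrtr.
  exact: le_trans (dotv_blockv_le _ _) (HM _ Sy).
by apply/bigmax_geP; right; exists r.
Qed.

End Blocks.

Section RescaledOptimisticGD.
Variables (R : realType) (n d : nat) (blk : 'I_n -> 'I_d) (Z : 'I_d -> set 'rV[R]_n).
Local Notation vec := 'rV[R]_n.
Local Notation X := (prodset blk Z).
Variables (F : vec -> vec) (a w : 'I_d -> vec -> R) (L alpha ell h B eta : R).
Local Notation A z := (blockdiag blk (a^~ z)).
Local Notation G z := (hadamard (A z) (F z)).

Hypothesis HFlip : forall x y, X x -> X y -> norm2 (F x - F y) <= L * norm2 (x - y).
Hypothesis Halip : forall r x y, X x -> X y -> `|a r x - a r y| <= alpha * norm2 (x - y).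
Hypothesis Hell : 0 < ell.
Hypothesis HAbd : forall x, X x -> forall i, ell <= A x ord0 i <= h.
Hypothesis HB : forall z r, X z -> norm2 (blockv blk r (F z)) <= B.

Lemma rescaled_lipschitz x y : X x -> X y ->
  dotv (G x - G y) (G x - G y) <=
    (2 * h ^+ 2 * L ^+ 2 + 2 * d%:R * alpha ^+ 2 * B ^+ 2) * dotv (x - y) (x - y).
Proof.
move=> Xx Xy; set D := dotv (x - y) (x - y).
have -> : G x - G y =
    hadamard (A x) (F x - F y) + hadamard (blockdiag blk (fun r => a r x - a r y)) (F y).
  by apply/rowP => i; rewrite !mxE; ring.
apply: le_trans (dotv_add_le _ _) _.
have lipF : dotv (hadamard (A x) (F x - F y)) (hadamard (A x) (F x - F y))
            <= h ^+ 2 * (L ^+ 2 * D).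
  apply: le_trans (dotv_hadamard_le (c := h ^+ 2) _ _) _.
    move=> i; have /andP[lo hi] := HAbd Xx i; have A0 := le_trans (ltW Hell) lo.
    by rewrite ler_sqr ?nnegrE // (le_trans A0).
  by rewrite ler_wpM2l ?sqr_ge0 // dotv_le_norm2 // HFlip.
have lipA : dotv (hadamard (blockdiag blk (fun r => a r x - a r y)) (F y))
                 (hadamard (blockdiag blk (fun r => a r x - a r y)) (F y))
            <= d%:R * (alpha ^+ 2 * D * B ^+ 2).
  rewrite dotv_blockdiag_hadamard mulr_natl -[in leRHS](card_ord d) -sumr_const.
  apply: ler_sum => r _; apply: ler_pM; rewrite ?sqr_ge0 ?dotv_ge0 //.
    rewrite -real_normK ?num_real // /D -norm2_sqr.
    by apply: ler_sqr_mul; rewrite ?normr_ge0 ?norm2_ge0 ?Halip.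
  by rewrite -norm2_sqr; have := HB r Xy; have := norm2_ge0 (blockv blk r (F y)); nra.
by lra.
Qed.

Variables (x xh : nat -> vec).
Hypothesis Hx0 : X (x 0%N).
Hypothesis Hxh1 : xh 1%N = x 0%N.
Hypothesis Hxt : forall t, (1 <= t)%N -> is_proj X (xh t - eta *: G (x t.-1)) (x t).
Hypothesis Hxht : forall t, (1 <= t)%N -> is_proj X (xh t - eta *: G (x t)) (xh t.+1).

Lemma iterate_in_domain t : X (x t).
Proof. by case: t => [|t] //; case: (Hxt (ltn0Sn t)). Qed.

Lemma extrapolation_in_domain t : (1 <= t)%N -> X (xh t).
Proof. by case: t => [//|[|t]] _; [rewrite Hxh1 | case: (Hxht (ltn0Sn t))]. Qed.

Hypothesis HZconv : forall r, convex_vset (Z r).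
Hypothesis Hellh : ell <= h.
Hypothesis Heta0 : 0 < eta.
Hypothesis Heta : (4 * eta) ^+ 2 * (h ^+ 3 * L ^+ 2 + h * B ^+ 2 * alpha ^+ 2 * d%:R) <= ell.
Variable s : vec.
Hypothesis Xs : X s.
Local Notation W := (blockdiag blk (w^~ s)).
Hypothesis HW : forall i, ell <= W ord0 i <= h.

Let h_ge0 : 0 <= h. Proof. exact: le_trans (ltW Hell) Hellh. Qed.

Let W_ge0 i : 0 <= W ord0 i.
Proof. by have /andP[lo _] := HW i; apply: le_trans lo; apply: ltW. Qed.

Local Notation P t := (wdot W (xh t - s) (xh t - s)).
Local Notation e t := (dotv (x t - xh t) (x t - xh t)).
Local Notation f t := (dotv (x t - xh t.+1) (x t - xh t.+1)).
Local Notation m t := (dotv (x t - s) (hadamard (hadamard (F (x t)) (A (x t))) W)).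

Lemma potential_step t : (1 <= t)%N ->
  P t.+1 <= P t - ell * (e t + f t) - 2 * eta * m t + ell / 2 * (e t + f t.-1).
Proof.
move=> t1; have Xxt := iterate_in_domain t.
have VI1 := weighted_proj_variational HZconv W_ge0 (Hxht t1) Xs.
have VI2 := weighted_proj_variational HZconv W_ge0 (Hxt t1) (extrapolation_in_domain (leqW t1)).
have VI3 := weighted_proj_variational HZconv W_ge0 (Hxht t1) Xxt.
have := optimistic_three_point W_ge0 VI1 VI2 VI3.
have -> : wdot W (G (x t)) (s - x t) = - m t.
  by rewrite /wdot /dotv -sumrN; apply: eq_bigr => i _; rewrite !mxE; ring.
have gap : ell * (e t + f t) <=
    wdot W (xh t - x t) (xh t - x t) + wdot W (xh t.+1 - x t) (xh t.+1 - x t).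
  rewrite mulrDr -!(opprB (x t)) !wdotNN.
  by apply: lerD; apply: wdot_ge_dotv => i; have /andP[] := HW i.
set K := 2 * h ^+ 2 * L ^+ 2 + 2 * d%:R * alpha ^+ 2 * B ^+ 2.
have K0 : 0 <= K by rewrite addr_ge0 // !(mulr_ge0 _ (sqr_ge0 _)) // mulr_ge0.
have drift : dotv (x t - x t.-1) (x t - x t.-1) <= 2 * (e t + f t.-1).
  rewrite prednK // mulrDr.
  have -> : x t - x t.-1 = (x t - xh t) - (x t.-1 - xh t) by rewrite opprB addrA subrK.
  exact: dotv_sub_le.
have extrapolation_error : 2 * eta ^+ 2 * wdot W (G (x t) - G (x t.-1)) (G (x t) - G (x t.-1))
    <= ell / 2 * (e t + f t.-1).
  apply: le_trans (_ : _ <= 2 * eta ^+ 2 * (h * (K * (2 * (e t + f t.-1))))) _.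
    rewrite ler_wpM2l ?(mulr_ge0 _ (sqr_ge0 _)) //.
    apply: le_trans (wdot_le_dotv (c := h) _ _) _; first by move=> i; have /andP[] := HW i.
    rewrite ler_wpM2l //.
    apply: le_trans (rescaled_lipschitz Xxt (iterate_in_domain t.-1)) _.
    by rewrite ler_wpM2l.
  have -> : 2 * eta ^+ 2 * (h * (K * (2 * (e t + f t.-1)))) =
      (4 * eta) ^+ 2 * (h ^+ 3 * L ^+ 2 + h * B ^+ 2 * alpha ^+ 2 * d%:R) / 2 * (e t + f t.-1).
    by rewrite /K; field.
  by rewrite ler_wpM2r ?addr_ge0 ?dotv_ge0 // ler_pM2r.
by lra.
Qed.

Lemma ogd_path_length T : 0 <= \sum_(1 <= t < T.+1) m t ->
  ell * \sum_(1 <= t < T.+1) (e t + f t) <= 2 * h * dotv (x 0%N - s) (x 0%N - s).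
Proof.
move=> minty.
have f0 : f 0%N = 0 by rewrite Hxh1 subrr /dotv big1 // => i _; rewrite mxE mul0r.
have P1 : P 1%N <= h * dotv (x 0%N - s) (x 0%N - s).
  by rewrite Hxh1; apply: wdot_le_dotv => i; have /andP[] := HW i.
have minty_eta : 0 <= \sum_(1 <= t < T.+1) 2 * eta * m t.
  by rewrite -mulr_sumr mulr_ge0 // mulr_ge0 // ltW.
have := potential_telescope (ltW Hell) f0 (dotv_ge0 _) (wdot_ge0 _ W_ge0) minty_eta potential_step.
by lra.
Qed.

End RescaledOptimisticGD.

Theorem corollary2 (R : realType) (n d : nat) (blk : 'I_n -> 'I_d)
  (Z : 'I_d -> set 'rV[R]_n)
  (HZsupp : forall r z, Z r z -> forall i, blk i != r -> z ord0 i = 0)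
  (HZne : forall r, Z r !=set0)
  (HZconv : forall r, convex_vset (Z r))
  (HZcpt : forall r, compact (Z r))
  (F : 'rV[R]_n -> 'rV[R]_n) (L : R)
  (HFlip : forall x y, prodset blk Z x -> prodset blk Z y ->
      norm2 (F x - F y) <= L * norm2 (x - y))
  (alpha ell h : R) (a w : 'I_d -> 'rV[R]_n -> R)
  (Hell : 0 < ell)
  (Halip : forall r x y, prodset blk Z x -> prodset blk Z y ->
      `|a r x - a r y| <= alpha * norm2 (x - y))
  (HAbd : forall x, prodset blk Z x -> forall i,
      ell <= blockdiag blk (a^~ x) ord0 i <= h)
  (HWbd : forall x, prodset blk Z x -> forall i,
      ell <= blockdiag blk (w^~ x) ord0 i <= h)
  (Hminty : forall (T : nat) (xs : nat -> 'rV[R]_n),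
      (forall t, (1 <= t <= T)%N -> prodset blk Z (xs t)) ->
      exists2 xstar, prodset blk Z xstar &
        0 <= \sum_(1 <= t < T.+1)
               dotv (xs t - xstar)
                 (hadamard (hadamard (F (xs t)) (blockdiag blk (a^~ (xs t))))
                           (blockdiag blk (w^~ xstar))))
  (eta : R) (Heta0 : 0 < eta)
  (Heta : (4 * eta) ^+ 2 *
          (h ^+ 3 * L ^+ 2 + h * (BF blk (prodset blk Z) F) ^+ 2 * alpha ^+ 2 * d%:R)
          <= ell)
  (x xh : nat -> 'rV[R]_n)
  (Hx0 : prodset blk Z (x 0%N)) (Hxh1 : xh 1%N = x 0%N)
  (Hxt : forall t, (1 <= t)%N ->
      is_proj (prodset blk Z)
        (xh t - eta *: hadamard (blockdiag blk (a^~ (x t.-1))) (F (x t.-1))) (x t))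
  (Hxht : forall t, (1 <= t)%N ->
      is_proj (prodset blk Z)
        (xh t - eta *: hadamard (blockdiag blk (a^~ (x t))) (F (x t))) (xh t.+1))
  (T : nat) :
  \sum_(1 <= t < T.+1) (norm2 (x t - xh t) ^+ 2 + norm2 (x t - xh t.+1) ^+ 2)
    <= 2 * (diam2 (prodset blk Z)) ^+ 2 * h / ell.
Proof.
set X := prodset blk Z.
have [n0|n_gt0] := posnP n.
  (* No coordinates: h may be negative, but both sides vanish. *)
  rewrite (diam2_dim0 n0 Hx0) big1 => [|t _]; last by rewrite !norm2_dim0 // expr0n addr0.
  by rewrite expr0n /= mulr0 !mul0r.
have Hellh : ell <= h by have /andP[lo hi] := HAbd _ Hx0 (Ordinal n_gt0); apply: le_trans hi.
have [M HM] := prodset_bounded blk HZcpt.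
have [MF HMF] := lipschitz_bounded HM HFlip Hx0.
have HB z r : X z -> norm2 (blockv blk r (F z)) <= BF blk X F by apply: le_BF HMF.
have [s Xs minty] := Hminty T x (fun t _ => iterate_in_domain Hx0 Hxt t).
have path := ogd_path_length HFlip Halip Hell HAbd HB Hx0 Hxh1 Hxt Hxht HZconv Hellh Heta0 Heta
  Xs (HWbd s Xs) minty.
have Dbound : dotv (x 0%N - s) (x 0%N - s) <= diam2 X ^+ 2.
  have D := le_diam2 HM Hx0 Xs.
  by rewrite -norm2_sqr ler_sqr ?nnegrE ?norm2_ge0 // (le_trans (norm2_ge0 _) D).
under eq_bigr do rewrite !norm2_sqr.
rewrite ler_pdivlMr // mulrC; apply: le_trans path _.
rewrite mulrAC; apply: ler_wpM2r; first exact: le_trans (ltW Hell) Hellh.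
by rewrite ler_pM2l.
Qed.
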